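(* Let $\mathbf d=(d_1\ge\cdots\ge d_n)$ be a weakly decreasing sequence of nonnegative integers and $\mathbf x^{\mathbf d}=x_1^{d_1}\cdots x_n^{d_n}$. If $w\in\mathfrak S_n$ satisfies $\mathrm{Des}(w)\subseteq\mathrm{Des}(\mathbf d)$, then the leading term of $\overline\pi_w(\mathbf x^{\mathbf d})$ with respect to neglex is the monomial $w(\mathbf x^{\mathbf d})=x_{w(1)}^{d_1}\cdots x_{w(n)}^{d_n}$.
   Context: $H_n(0)$ acts on $\mathbb F[x_1,\dots,x_n]$ ($\mathbb F$ any field) via isobaric Demazure operators $\pi_i(f)=\frac{x_if-x_{i+1}s_i(f)}{x_i-x_{i+1}}$, where $s_i$ swaps $x_i$ and $x_{i+1}$. $\overline\pi_i=\pi_i-1$, i.e. $\overline\pi_i(f)=\frac{x_{i+1}(f-s_i(f))}{x_i-x_{i+1}}$, and $\overline\pi_w=\overline\pi_{i_1}\cdots\overline\pi_{i_\ell}$ for any reduced expression $w=s_{i_1}\cdots s_{i_\ell}$. A permutation acts on polynomials by $x_i\mapsto x_{w(i)}$. For an integer sequence $\mathbf i$, $\mathrm{Des}(\mathbf i)=\{j: i_j>i_{j+1}\}$; for $w\in\mathfrak S_n$, $\mathrm{Des}(w)=\{j:w(j)>w(j+1)\}$. Neglex is the lexicographic term order with $x_n>\cdots>x_1$. *)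

(* Polynomials in n variables over a field F are represented
   as coefficient functions on exponent vectors (finitely supported ones are
   singled out by [is_poly]).  Variables x_1..x_n are indexed 0..n-1. *)
From HB Require Import structures.
From mathcomp Require Import all_boot all_order all_algebra all_fingroup.
From Stdlib Require Import ClassicalEpsilon.
Set Implicit Arguments. Unset Strict Implicit. Unset Printing Implicit Defensive.
Import GRing.Theory.
Local Open Scope ring_scope.

(* exponent vectors: b k = exponent of x_(k+1) *)
Definition mon (n : nat) := {ffun 'I_n -> nat}.

Definition mpoly (F : fieldType) (n : nat) := mon n -> F.

(* finitely supported = genuine polynomial *)
Definition is_poly (F : fieldType) n (f : mpoly F n) : Prop :=
  exists N : nat, forall b : mon n, f b != 0 -> forall k, (b k <= N)%N.

Definition monomial (F : fieldType) n (m : mon n) : mpoly F n :=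
  fun b => if b == m then 1 else 0.

(* adjacent transposition s_i (0-based: swaps positions i and i+1),
   identity if i+1 >= n (never used in that case) *)
Definition sadj (n i : nat) : 'S_n :=
  match (insub i : option 'I_n), (insub i.+1 : option 'I_n) with
  | Some a, Some b => tperm a b
  | _, _ => 1%g
  end.

Definition mulX (F : fieldType) n (j : nat) (g : mpoly F n) : mpoly F n :=
  fun b => if [exists k : 'I_n, (val k == j) && (0 < b k)%N]
           then g [ffun k => if val k == j then (b k).-1 else b k]
           else 0.

Definition swapS (F : fieldType) n (i : nat) (f : mpoly F n) : mpoly F n :=
  fun b => f [ffun k => b (sadj n i k)].

(* bar pi_i f = x_{i+1} (f - s_i f) / (x_i - x_{i+1}) (1-based), i.e. the
   unique polynomial g with (x_i - x_{i+1}) g = x_{i+1} (f - s_i f). *)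
Definition pibar_spec (F : fieldType) n (i : nat) (f g : mpoly F n) : Prop :=
  is_poly g /\
  forall b, mulX i g b - mulX i.+1 g b
            = mulX i.+1 (fun c => f c - swapS i f c) b.

Definition pibar (F : fieldType) n (i : nat) (f : mpoly F n) : mpoly F n :=
  epsilon (inhabits (fun _ => 0)) (pibar_spec i f).

Definition pibar_word (F : fieldType) n (s : seq nat) (f : mpoly F n) : mpoly F n :=
  foldr (fun i h => pibar i h) f s.

(* s is a reduced expression w = s_{i1} ... s_{il} (composition of maps) *)
Definition inversions n (w : 'S_n) : nat :=
  #|[set p : 'I_n * 'I_n | (p.1 < p.2)%N && (w p.2 < w p.1)%N]|.

Definition reduced_word n (w : 'S_n) (s : seq nat) : Prop :=
  all (fun i => i.+1 < n)%N s /\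
  (forall k : 'I_n, w k = foldr (fun i y => sadj n i y) k s) /\
  size s = inversions w.

Definition des_sub n (w : 'S_n) (d : mon n) : Prop :=
  forall j j' : 'I_n, val j' = (val j).+1 ->
    (w j' < w j)%N -> (d j' < d j)%N.

Definition weakly_decr n (d : mon n) : Prop :=
  forall i j : 'I_n, (i <= j)%N -> (d j <= d i)%N.

(* w(x^d) = prod_k x_{w(k)}^{d_k}: exponent vector b with b (w k) = d k *)
Definition act_mon n (w : 'S_n) (d : mon n) : mon n :=
  [ffun k => d ((w^-1)%g k)].

(* neglex: lex order with x_n > ... > x_1; a >_neglex b *)
Definition neglex_gt n (a b : mon n) : Prop :=
  exists k : 'I_n, (b k < a k)%N /\ forall j : 'I_n, (k < j)%N -> a j = b j.

Definition leading_term (F : fieldType) n (h : mpoly F n) (m : mon n) (c : F) : Prop :=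
  c != 0 /\ h m = c /\ forall b, h b != 0 -> b <> m -> neglex_gt m b.

(* Say that [m] dominates [b] if [sum_k (b_k - th_k)_+ <= sum_k (m_k - th_k)_+] for every
   weakly decreasing [th]. Taking [th] huge before the last position where [b] and [m] differ
   and [0] from there on shows that a dominated [b <> m] is neglex-smaller than [m].
   Induct along the reduced word: peeling off its first letter writes [w = s_i w'] with
   [l(w) = l(w') + 1], so [w'^-1(i) < w'^-1(i+1)], and the descent condition on [w] with [d]
   weakly decreasing forces the exponent of [x_i] in [m := w'(x^d)] to exceed that of
   [x_(i+1)]. For such [m], solving [(x_i - x_(i+1)) g = x_(i+1) (f - s_i f)] coefficientwise
   shows that pibar_i sends a polynomial with coefficient 1 at [m] and support dominated by
   [m] to one with coefficient 1 at [s_i m] and support dominated by [s_i m]. *)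

From mathcomp Require Import all_boot all_order all_algebra all_fingroup.
From mathcomp Require Import zify ring.
From Stdlib Require Import ClassicalEpsilon.
Set Implicit Arguments. Unset Strict Implicit. Unset Printing Implicit Defensive.
Import GRing.Theory.

Lemma sumr_neq0_exists (R : nmodType) m (G : 'I_m -> R) :
  (\sum_(t < m) G t)%R != 0%R -> exists t, G t != 0%R.
Proof.
move=> S; case: (pickP (fun t => G t != 0%R)) => [t Gt | G0]; first by exists t.
by move: S; rewrite big1 ?eqxx // => t _; apply/eqP/negbFE/G0.
Qed.

(** * The defining equation of pibar_i *)

Section AdjacentPair.
Variables (n i : nat).
Hypothesis lt_i1n : i.+1 < n.

Definition ord_i : 'I_n := Ordinal (ltnW lt_i1n).
Definition ord_i1 : 'I_n := Ordinal lt_i1n.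

Lemma ord_i1_neq : (ord_i1 == ord_i) = false.
Proof. by rewrite -val_eqE /= eqn_leq ltnn. Qed.

Lemma ord_i_neq : (ord_i == ord_i1) = false.
Proof. by rewrite eq_sym ord_i1_neq. Qed.

Lemma eq_ord_i (k : 'I_n) : (k == ord_i) = (k == i :> nat).
Proof. by rewrite -val_eqE. Qed.

Lemma eq_ord_i1 (k : 'I_n) : (k == ord_i1) = (k == i.+1 :> nat).
Proof. by rewrite -val_eqE. Qed.

Lemma sadj_tperm : sadj n i = tperm ord_i ord_i1.
Proof.
rewrite /sadj (insubT (fun k => k < n) (ltnW lt_i1n)) (insubT (fun k => k < n) lt_i1n).
by congr tperm; apply: val_inj.
Qed.

Definition set_pair (b : mon n) (x y : nat) : mon n :=
  [ffun k => if k == ord_i then x else if k == ord_i1 then y else b k].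

Lemma set_pair_i b x y : set_pair b x y ord_i = x.
Proof. by rewrite ffunE eqxx. Qed.

Lemma set_pair_i1 b x y : set_pair b x y ord_i1 = y.
Proof. by rewrite ffunE ord_i1_neq eqxx. Qed.

Lemma set_pairD b x y k : k != ord_i -> k != ord_i1 -> set_pair b x y k = b k.
Proof. by rewrite ffunE => /negPf-> /negPf->. Qed.

Lemma set_pairK b x y x' y' : set_pair (set_pair b x y) x' y' = set_pair b x' y'.
Proof. by apply/ffunP=> k; rewrite !ffunE; case: (k =P ord_i); case: (k =P ord_i1). Qed.

Lemma set_pair_id b : set_pair b (b ord_i) (b ord_i1) = b.
Proof.
apply/ffunP=> k; rewrite !ffunE.
by case: (k =P ord_i) => [->|_] //; case: (k =P ord_i1) => [->|].
Qed.

Variable F : fieldType.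

Lemma mulX_i (g : mpoly F n) b :
  mulX i g b = if 0 < b ord_i then g (set_pair b (b ord_i).-1 (b ord_i1)) else 0%R.
Proof.
rewrite /mulX; have -> : [exists k : 'I_n, (val k == i) && (0 < b k)] = (0 < b ord_i).
  apply/existsP/idP => [[k /andP[]]|b_pos]; last by exists ord_i; rewrite eqxx b_pos.
  by rewrite -eq_ord_i => /eqP->.
case: ifP => // _; congr g; apply/ffunP=> k; rewrite !ffunE -eq_ord_i.
by case: (k =P ord_i) => [->|_] //; case: (k =P ord_i1) => [->|].
Qed.

Lemma mulX_i1 (g : mpoly F n) b :
  mulX i.+1 g b = if 0 < b ord_i1 then g (set_pair b (b ord_i) (b ord_i1).-1) else 0%R.
Proof.
rewrite /mulX; have -> : [exists k : 'I_n, (val k == i.+1) && (0 < b k)] = (0 < b ord_i1).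
  apply/existsP/idP => [[k /andP[]]|b_pos]; last by exists ord_i1; rewrite eqxx b_pos.
  by rewrite -eq_ord_i1 => /eqP->.
case: ifP => // _; congr g; apply/ffunP=> k; rewrite !ffunE -eq_ord_i1.
case: (k =P ord_i) => [->|_]; first by rewrite ord_i_neq.
by case: (k =P ord_i1) => [->|].
Qed.

Lemma swapS_set_pair (f : mpoly F n) b : swapS i f b = f (set_pair b (b ord_i1) (b ord_i)).
Proof.
rewrite /swapS sadj_tperm; congr f; apply/ffunP=> k; rewrite !ffunE.
case: (k =P ord_i) => [->|/eqP ki]; first by rewrite tpermL.
case: (k =P ord_i1) => [->|/eqP ki1]; first by rewrite tpermR.
by rewrite tpermD // eq_sym.
Qed.

Definition pibar_rhs (f : mpoly F n) (b : mon n) : F :=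
  mulX i.+1 (fun c => f c - swapS i f c)%R b.

Lemma pibar_rhs_set_pair f c x y : pibar_rhs f (set_pair c x y) =
  if 0 < y then (f (set_pair c x y.-1) - f (set_pair c y.-1 x))%R else 0%R.
Proof.
by rewrite /pibar_rhs mulX_i1 set_pair_i1 set_pair_i set_pairK swapS_set_pair
  set_pair_i1 set_pair_i set_pairK.
Qed.

Lemma pibar_rhs_neq0 f c x y : pibar_rhs f (set_pair c x y.+1) != 0%R ->
  exists u v, [/\ u + v = x + y, f (set_pair c u v) != 0%R & v = y \/ u = y].
Proof.
rewrite pibar_rhs_set_pair /=; case: (f (set_pair c x y) =P 0%R) => [->|/eqP fxy].
  by rewrite sub0r oppr_eq0 => fyx; exists y, x; split; [rewrite addnC | | right].
by move=> _; exists x, y; split; [| | left].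
Qed.

Definition pibar_eqn (g f : mpoly F n) :=
  forall b, (mulX i g b - mulX i.+1 g b = pibar_rhs f b)%R.

Lemma pibar_eqn_set_pair g f : pibar_eqn g f -> forall c x y,
  ((if (0 < x)%N then g (set_pair c x.-1 y) else 0) -
   (if (0 < y)%N then g (set_pair c x y.-1) else 0) = pibar_rhs f (set_pair c x y))%R.
Proof. by move=> E c x y; rewrite -E mulX_i mulX_i1 !set_pair_i !set_pair_i1 !set_pairK. Qed.

(* The equation is a first-order recurrence along each antidiagonal [x + y = const] of the
   exponents of [x_i], [x_(i+1)]; it can be solved from either end. *)
Lemma pibar_eqn_down g f : pibar_eqn g f -> forall c x y,
  g (set_pair c x y) = (- \sum_(t < x.+1) pibar_rhs f (set_pair c (x - t) (y + t).+1))%R.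
Proof.
move=> /pibar_eqn_set_pair E c x; elim: x => [|x IH] y.
  by rewrite big_ord1 subn0 addn0 -(E c 0 y.+1) /= opprB subr0.
rewrite big_ord_recl subn0 addn0 -(E c x.+1 y.+1) /= IH.
under [in RHS]eq_bigr => t _ do rewrite /bump /= add1n subSS addnS -addSn.
by ring.
Qed.

Lemma pibar_eqn_up g f : pibar_eqn g f -> forall c x y,
  g (set_pair c x y) = (\sum_(t < y) pibar_rhs f (set_pair c (x + t).+1 (y - t)))%R.
Proof.
move=> /pibar_eqn_set_pair E c x y; elim: y x => [|y IH] x.
  by have := E c x.+1 0; rewrite /= pibar_rhs_set_pair big_ord0 subr0.
rewrite big_ord_recl addn0 subn0 -(E c x.+1 y.+1) /= IH.
under [in RHS]eq_bigr => t _ do rewrite /bump /= add1n subSS addnS -addSn.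
by rewrite subrK.
Qed.

Definition pibar_sol (f : mpoly F n) : mpoly F n := fun c =>
  (- \sum_(t < (c ord_i).+1) pibar_rhs f (set_pair c (c ord_i - t) (c ord_i1 + t).+1))%R.

Lemma pibar_sol_set_pair f c x y : pibar_sol f (set_pair c x y) =
  (- \sum_(t < x.+1) pibar_rhs f (set_pair c (x - t) (y + t).+1))%R.
Proof.
by rewrite /pibar_sol set_pair_i set_pair_i1; under eq_bigr => t _ do rewrite set_pairK.
Qed.

Lemma pibar_sol_eqn f : pibar_eqn (pibar_sol f) f.
Proof.
move=> b; rewrite -[b]set_pair_id mulX_i mulX_i1 !set_pair_i !set_pair_i1 !set_pairK.
rewrite !pibar_sol_set_pair; case: (b ord_i) => [|x]; case: (b ord_i1) => [|y] /=.
- by rewrite pibar_rhs_set_pair subr0.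
- by rewrite big_ord1 subn0 addn0 sub0r opprK.
- (* the antidiagonal sum of [f - s_i f] vanishes *)
  rewrite subr0 pibar_rhs_set_pair /=.
  under eq_bigr => t _ do rewrite pibar_rhs_set_pair /= add0n.
  rewrite sumrB (reindex_inj rev_ord_inj) /=.
  under [X in (X - _)%R]eq_bigr => t _ do rewrite subSS subKn ?leq_ord //.
  by rewrite subrr oppr0.
- rewrite [(\sum_(t < x.+2) _)%R]big_ord_recl subn0 addn0.
  under [in X in (_ + X)%R]eq_bigr => t _ do rewrite lift0 subSS addnS -addSn.
  by ring.
Qed.

Lemma is_poly_pibar_sol f : is_poly f -> is_poly (pibar_sol f).
Proof.
case=> N f_bnd; exists (N + N) => c; rewrite oppr_eq0 => /sumr_neq0_exists[t].
move=> /pibar_rhs_neq0[u [v [uv /f_bnd uv_bnd _]]] k.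
have [/eqP-> | ki] := boolP (k == ord_i).
  by have := uv_bnd ord_i; have := uv_bnd ord_i1; rewrite set_pair_i set_pair_i1; lia.
have [/eqP-> | ki1] := boolP (k == ord_i1).
  by have := uv_bnd ord_i; have := uv_bnd ord_i1; rewrite set_pair_i set_pair_i1; lia.
by have := uv_bnd k; rewrite set_pairD //; lia.
Qed.

Lemma pibar_specP (f : mpoly F n) : is_poly f -> pibar_spec i f (pibar i f).
Proof.
move=> f_poly; apply: epsilon_spec.
by exists (pibar_sol f); split; [apply: is_poly_pibar_sol | apply: pibar_sol_eqn].
Qed.

Lemma is_poly_pibar (f : mpoly F n) : is_poly f -> is_poly (pibar i f).
Proof. by case/pibar_specP. Qed.

Lemma pibar_eqn_pibar (f : mpoly F n) : is_poly f -> pibar_eqn (pibar i f) f.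
Proof. by case/pibar_specP. Qed.

End AdjacentPair.

(** * Dominance *)

Lemma subn_rearrange x y a c : y <= x -> c <= a -> (x - a) + (y - c) <= (y - a) + (x - c).
Proof. lia. Qed.

Lemma subn_raise_low p x c l : c <= l -> l <= maxn c x -> (p - c) + (x - l) <= (p - l) + (x - c).
Proof. lia. Qed.

Lemma subn_lower_high q x a l : l <= a -> minn a x <= l -> (q - a) + (x - l) <= (q - l) + (x - a).
Proof. lia. Qed.

Lemma subn_pair_convex N y lo hi a c : lo <= y <= hi -> hi <= N -> c <= a ->
  (N - y - a) + (y - c) <= maxn ((N - lo - a) + (lo - c)) ((N - hi - a) + (hi - c)).
Proof.
move=> /andP[lo_y y_hi] hi_N c_a; rewrite leq_max.
case: (leqP y c) => [y_c | c_y]; first by apply/orP; left; lia.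
case: (leqP (N - a) y) => [a_y | y_a]; apply/orP; [right | left]; lia.
Qed.

Lemma excess_pair_swap rb rm p q al be a c l u : be < al -> c <= a ->
  c <= l <= maxn c al -> u <= a -> minn a be <= u ->
  rb + (p - a) + (q - c) <= rm + (al - a) + (be - c) ->
  rb + (p - l) + (q - u) <= rm + (al - l) + (be - u) ->
  rb + (p - a) + (q - c) <= rm + (be - a) + (al - c) /\
  rb + (q - a) + (p - c) <= rm + (be - a) + (al - c).
Proof.
move=> lt_be_al le_c_a /andP[le_c_l le_l] le_u_a le_u dom_a dom_l.
have := subn_rearrange (ltnW lt_be_al) le_c_a.
have := subn_raise_low p le_c_l le_l; have := subn_lower_high q le_u_a le_u.
move: dom_a dom_l.
move: (p - a) (q - c) (al - a) (be - c) (be - a) (al - c) (q - a) (p - c) => ????????.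
move: (p - l) (q - u) (al - l) (be - u) => ????.
clear; move=> *; split; lia.
Qed.

Definition excess n (th b : mon n) : nat := \sum_(k < n) (b k - th k).

Definition dominates n (m b : mon n) : Prop :=
  forall th, weakly_decr th -> excess th b <= excess th m.

Definition step_weight n (k : 'I_n) (B : nat) : mon n :=
  [ffun j : 'I_n => if j < k then B else 0].

Lemma weakly_decr_step_weight n (k : 'I_n) B : weakly_decr (step_weight k B).
Proof.
move=> j j' le_jj'; rewrite !ffunE.
by case: ifP => // lt_j'k; rewrite (leq_ltn_trans le_jj' lt_j'k).
Qed.

Lemma excess_step_weight n (k : 'I_n) B (v : mon n) : (forall j, v j <= B) ->
  excess (step_weight k B) v = \sum_(j < n | k <= j) v j.
Proof.
move=> v_bnd; rewrite /excess (bigID (fun j : 'I_n => k <= j)) /= addnC big1 ?add0n.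
  by apply: eq_bigr => j le_kj; rewrite ffunE ltnNge le_kj subn0.
by move=> j; rewrite -ltnNge ffunE => ->; apply/eqP; rewrite subn_eq0.
Qed.

Lemma dominates_neglex n (m b : mon n) : dominates m b -> b <> m -> neglex_gt m b.
Proof.
move=> dom_mb neq_bm.
have [k0 bk0] : exists k, b k != m k.
  apply/existsP; apply: contra_notT neq_bm => /existsPn eq_bm.
  by apply/ffunP => k; apply/eqP/negbNE.
have [k bk k_max] := @arg_maxnP _ k0 (fun k => b k != m k) (fun k : 'I_n => val k) bk0.
have eq_above (j : 'I_n) : k < j -> b j = m j.
  by move=> lt_kj; apply/eqP; apply: contraTT lt_kj => /k_max; rewrite -leqNgt.
exists k; split; last by move=> j /eq_above.
pose B := \max_j maxn (b j) (m j).
have bnd_b j : b j <= B by apply: leq_trans (leq_maxl _ _) (leq_bigmax _).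
have bnd_m j : m j <= B by apply: leq_trans (leq_maxr _ _) (leq_bigmax _).
have := dom_mb _ (weakly_decr_step_weight k B).
rewrite (excess_step_weight _ bnd_b) (excess_step_weight _ bnd_m).
rewrite (bigD1 k (leqnn k)) (bigD1 k (leqnn k)) /=.
rewrite (eq_bigr m) => [|j /andP[le_kj neq_jk]]; last first.
  by apply: eq_above; rewrite ltn_neqAle le_kj eq_sym andbT.
by rewrite leq_add2r ltn_neqAle bk.
Qed.

Definition dominant_term (F : fieldType) n (h : mpoly F n) (m : mon n) : Prop :=
  [/\ is_poly h, h m = 1%R & forall b, h b != 0%R -> dominates m b].

Lemma dominant_term_monomial (F : fieldType) n (d : mon n) : dominant_term (monomial F d) d.
Proof.
split.
- exists (\max_k d k) => b; rewrite /monomial.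
  by case: (b =P d) => [-> _ k|]; rewrite ?eqxx ?leq_bigmax.
- by rewrite /monomial eqxx.
- by move=> b; rewrite /monomial; case: (b =P d) => [-> _ th _|]; rewrite ?eqxx.
Qed.

Lemma dominant_term_leading (F : fieldType) n (h : mpoly F n) (m : mon n) :
  dominant_term h m -> leading_term h m 1%R.
Proof.
case=> _ hm dom_h; split; first exact: oner_neq0.
by split=> // b /dom_h; apply: dominates_neglex.
Qed.

Section DominanceStep.
Variables (n i : nat).
Hypothesis lt_i1n : i.+1 < n.
Local Notation oi := (ord_i lt_i1n).
Local Notation oi1 := (ord_i1 lt_i1n).
Local Notation set_pair := (set_pair lt_i1n).

Definition swap_pair (b : mon n) : mon n := set_pair b (b oi1) (b oi).

Definition excess_rest (th b : mon n) : nat :=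
  \sum_(k < n | (k != oi) && (k != oi1)) (b k - th k).

Lemma excess_split th b : excess th b = excess_rest th b + (b oi - th oi) + (b oi1 - th oi1).
Proof.
rewrite /excess (bigD1 oi) // (bigD1 oi1) /=; last by rewrite ord_i1_neq.
by rewrite addnA addnC addnA.
Qed.

Lemma excess_rest_set_pair th c x y : excess_rest th (set_pair c x y) = excess_rest th c.
Proof. by apply: eq_bigr => k /andP[ki ki1]; rewrite set_pairD. Qed.

Lemma excess_rest_set_pair_weight th c x y :
  excess_rest (set_pair th x y) c = excess_rest th c.
Proof. by apply: eq_bigr => k /andP[ki ki1]; rewrite set_pairD. Qed.

Lemma excess_set_pair th c x y :
  excess th (set_pair c x y) = excess_rest th c + (x - th oi) + (y - th oi1).
Proof.
by rewrite excess_split excess_rest_set_pair set_pair_i set_pair_i1.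
Qed.

Lemma swap_set_pair c x y : swap_pair (set_pair c x y) = set_pair c y x.
Proof. by rewrite /swap_pair set_pairK set_pair_i set_pair_i1. Qed.

Lemma weakly_decr_set_pair th x y : weakly_decr th ->
  th oi1 <= y -> y <= x -> x <= th oi -> weakly_decr (set_pair th x y).
Proof.
move=> th_decr th1_y y_x x_th0 k l le_kl; rewrite !ffunE !eq_ord_i !eq_ord_i1.
have th_le_i : k <= i -> th oi <= th k by exact: (th_decr k oi).
have th_ge_i1 : i.+1 <= l -> th l <= th oi1 by exact: (th_decr oi1 l).
have := th_decr k l le_kl.
by repeat case: ifP => /eqP ?; lia.
Qed.

(* Testing against [th] itself only bounds [b]; the bound on [swap_pair b] comes from testing
   against [th] with its pair clamped into the range of [m]'s pair. *)
Lemma dominates_swap (m b : mon n) : m oi1 < m oi -> dominates m b ->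
  dominates (swap_pair m) b /\ dominates (swap_pair m) (swap_pair b).
Proof.
move=> lt_m dom_mb; suff dom th : weakly_decr th ->
    excess th b <= excess th (swap_pair m) /\ excess th (swap_pair b) <= excess th (swap_pair m).
  by split=> th /dom[].
move=> th_decr; have le_th : th oi1 <= th oi by apply: th_decr => /=.
pose l := maxn (th oi1) (minn (th oi) (m oi)).
pose u := maxn (th oi1) (minn (th oi) (m oi1)).
have le_l : th oi1 <= l <= maxn (th oi1) (m oi).
  by rewrite leq_maxl geq_max leq_maxl (leq_trans (geq_minr _ _) (leq_maxr _ _)).
have le_u_a : u <= th oi by rewrite geq_max le_th geq_minl.
have le_u : minn (th oi) (m oi1) <= u by apply: leq_maxr.
have th'_decr : weakly_decr (set_pair th l u).
  apply: weakly_decr_set_pair => //; rewrite /l /u; lia.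
have dom_th := dom_mb _ th_decr; have dom_th' := dom_mb _ th'_decr.
rewrite -[b](set_pair_id lt_i1n) -[m](set_pair_id lt_i1n) !excess_set_pair in dom_th dom_th'.
rewrite !excess_rest_set_pair_weight !set_pair_i !set_pair_i1 in dom_th'.
rewrite /swap_pair [excess th b]excess_split !excess_set_pair.
exact: excess_pair_swap lt_m le_th le_l le_u_a le_u dom_th dom_th'.
Qed.

Lemma dominates_set_pair_le (m : mon n) u v : m oi1 <= m oi ->
  dominates m (set_pair m u v) -> u <= m oi /\ v <= m oi1.
Proof.
move=> le_m dom.
pose th : mon n := [ffun k : 'I_n => if k <= i then m oi else m oi1].
have th_decr : weakly_decr th.
  by move=> k l le_kl; rewrite !ffunE; case: ifP; case: ifP => //; lia.
have := dom _ th_decr; rewrite excess_set_pair [excess th m]excess_split !ffunE /=.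
by rewrite leqnn ltnn subnn; lia.
Qed.

Section Pibar.
Variables (F : fieldType) (h : mpoly F n).
Hypothesis h_poly : is_poly h.

Lemma pibar_support_between (P : mon n -> Prop) c :
  (forall b, h b != 0%R -> P b /\ P (swap_pair b)) -> pibar i h c != 0%R ->
  exists lo hi, [/\ lo <= c oi1 <= hi, hi <= c oi + c oi1,
    P (set_pair c (c oi + c oi1 - lo) lo) & P (set_pair c (c oi + c oi1 - hi) hi)].
Proof.
move=> hP; rewrite -{1}[c](set_pair_id lt_i1n) => pc.
have E := pibar_eqn_pibar lt_i1n h_poly.
have P_at y : (exists u v, [/\ u + v = c oi + c oi1, h (set_pair c u v) != 0%R
    & v = y \/ u = y]) -> P (set_pair c (c oi + c oi1 - y) y).
  case=> u [v [<- /hP[Puv] + [<-|<-]]]; rewrite swap_set_pair => Pvu.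
    by rewrite addnK.
  by rewrite addKn.
have [hi /andP[hi_ge hi_le] Phi] : exists2 hi, c oi1 <= hi <= c oi + c oi1 &
    P (set_pair c (c oi + c oi1 - hi) hi).
  move: pc; rewrite (pibar_eqn_down lt_i1n E) oppr_eq0 => /sumr_neq0_exists[t].
  move=> /pibar_rhs_neq0[u [v [uv huv uv_eq]]]; have := leq_ord t.
  exists (c oi1 + t); first by apply/andP; split; lia.
  by apply: P_at; exists u, v; split=> //; lia.
have [lo lo_le Plo] : exists2 lo, lo <= c oi1 & P (set_pair c (c oi + c oi1 - lo) lo).
  move: pc; rewrite (pibar_eqn_up lt_i1n E) => /sumr_neq0_exists[t].
  have lt_t := ltn_ord t; rewrite -(subnSK lt_t).
  move=> /pibar_rhs_neq0[u [v [uv huv uv_eq]]].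
  exists (c oi1 - t.+1); first exact: leq_subr.
  by apply: P_at; exists u, v; split=> //; lia.
by exists lo, hi; split=> //; rewrite lo_le hi_ge.
Qed.

Lemma dominates_pibar (m : mon n) : m oi1 < m oi ->
  (forall b, h b != 0%R -> dominates m b) ->
  forall c, pibar i h c != 0%R -> dominates (swap_pair m) c.
Proof.
move=> lt_m dom_h c pc th th_decr.
have dom_swap b : h b != 0%R -> dominates (swap_pair m) b /\ dominates (swap_pair m) (swap_pair b).
  by move/dom_h; apply: dominates_swap.
have [lo [hi [lo_c_hi hi_le /(_ th th_decr) dom_lo /(_ th th_decr) dom_hi]]] :=
  pibar_support_between dom_swap pc.
have le_th : th oi1 <= th oi by apply: th_decr => /=.
have := subn_pair_convex lo_c_hi hi_le le_th; rewrite addnK => convex.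
set E := excess th (swap_pair m) in dom_lo dom_hi *.
rewrite !excess_set_pair -!addnA in dom_lo dom_hi.
rewrite -{1}[c](set_pair_id lt_i1n) excess_set_pair -addnA.
apply: leq_trans (leq_add (leqnn _) convex) _.
by rewrite addn_maxr geq_max dom_lo dom_hi.
Qed.

Lemma pibar_coef_swap (m : mon n) : m oi1 < m oi -> h m = 1%R ->
  (forall b, h b != 0%R -> dominates m b) -> pibar i h (swap_pair m) = 1%R.
Proof.
move=> lt_m hm dom_h.
have h_out u v : (m oi < u) || (m oi1 < v) -> h (set_pair m u v) = 0%R.
  move=> out; apply/eqP; apply: contraTT out.
  move=> /dom_h /(dominates_set_pair_le (ltnW lt_m)) [le_u le_v].
  by rewrite negb_or -!leqNgt le_u le_v.
rewrite (pibar_eqn_down lt_i1n (pibar_eqn_pibar lt_i1n h_poly)) (bigD1 ord0) //=.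
rewrite big1 => [|t /eqP t_neq0]; last first.
  have t_gt0 : 0 < t by rewrite lt0n; apply: contra_not_neq t_neq0 => t0; apply: val_inj.
  rewrite pibar_rhs_set_pair /= !h_out ?subrr // ?(ltn_addr _ lt_m) ?orbT //.
  by rewrite -{1}(addn0 (m oi)) ltn_add2l t_gt0.
rewrite pibar_rhs_set_pair /= subn0 addn0 h_out ?lt_m ?orbT // set_pair_id hm.
by rewrite sub0r addr0 opprK.
Qed.
End Pibar.

Lemma dominant_term_pibar (F : fieldType) (h : mpoly F n) (m : mon n) : m oi1 < m oi ->
  dominant_term h m -> dominant_term (pibar i h) (swap_pair m).
Proof.
move=> lt_m [h_poly hm dom_h]; split.
- exact: is_poly_pibar.
- exact: pibar_coef_swap.
- exact: dominates_pibar.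
Qed.

End DominanceStep.

(** * Reduced words and descents *)

Lemma exists_adjacent_descent n (w : 'S_n) (a b : 'I_n) : a < b -> w b < w a ->
  exists j j' : 'I_n, [/\ j' = j.+1 :> nat, a <= j, j' <= b & w j' < w j].
Proof.
have [k Eb] : exists k, nat_of_ord b = k by exists (nat_of_ord b).
elim: k b Eb => [|k IH] b Eb lt_ab; first by rewrite Eb in lt_ab.
have /ltnW lt_kn : k.+1 < n by rewrite -Eb.
pose c := Ordinal lt_kn; case: (ltnP (w b) (w c)) => [lt_wbc _ | le_wcb lt_wba].
  by exists c, b; split; rewrite ?Eb // -ltnS -Eb.
case: (ltnP a c) => [lt_ac | le_ca].
  have [j [j' [jj' le_aj le_j'c w_desc]]] := IH c erefl lt_ac (leq_ltn_trans le_wcb lt_wba).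
  by exists j, j'; split=> //; rewrite (leq_trans le_j'c) // Eb.
have ac : a = c by apply: val_inj; apply/eqP; rewrite eqn_leq le_ca -ltnS -Eb lt_ab.
by move: lt_wba; rewrite ac ltnNge le_wcb.
Qed.

Lemma des_sub_weakly_decr n (w : 'S_n) (d : mon n) (a b : 'I_n) :
  weakly_decr d -> des_sub w d -> a < b -> w b < w a -> d b < d a.
Proof.
move=> d_decr des lt_ab /(exists_adjacent_descent lt_ab) [j [j' [jj' le_aj le_j'b w_desc]]].
exact: leq_ltn_trans (d_decr _ _ le_j'b) (leq_trans (des _ _ jj' w_desc) (d_decr _ _ le_aj)).
Qed.

Section AdjacentTransposition.
Variables (n i : nat).
Hypothesis lt_i1n : i.+1 < n.
Local Notation oi := (ord_i lt_i1n).
Local Notation oi1 := (ord_i1 lt_i1n).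
Local Notation t := (tperm oi oi1).
Local Open Scope group_scope.

Lemma tperm_adj_val (u : 'I_n) :
  t u = (if u == i :> nat then i.+1 else if u == i.+1 :> nat then i else u) :> nat.
Proof.
rewrite -(eq_ord_i lt_i1n) -(eq_ord_i1 lt_i1n).
by case: tpermP => [->|->|/eqP/negPf-> /eqP/negPf->]; rewrite ?eqxx ?ord_i1_neq.
Qed.

Lemma tperm_adj_ltn (u v : 'I_n) : (t v < t u) =
  if (u == oi) && (v == oi1) then true
  else if (u == oi1) && (v == oi) then false else v < u.
Proof.
rewrite !tperm_adj_val !(eq_ord_i lt_i1n) !(eq_ord_i1 lt_i1n).
move: (nat_of_ord u) (nat_of_ord v) => U V.
by repeat case: eqP => ?; rewrite /= ?andbT ?andbF /=; lia.
Qed.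

Lemma inversions_mul_tperm (p : 'S_n) :
  p^-1 oi < p^-1 oi1 -> inversions (p * t) = (inversions p).+1.
Proof.
move=> lt_p.
have p_eq_i a : (p a == oi) = (a == p^-1 oi) by rewrite -[RHS](inj_eq (@perm_inj _ p)) permKV.
have p_eq_i1 a : (p a == oi1) = (a == p^-1 oi1) by rewrite -[RHS](inj_eq (@perm_inj _ p)) permKV.
rewrite /inversions.
have -> : [set q : 'I_n * 'I_n | (q.1 < q.2)%N && ((p * t)%g q.2 < (p * t)%g q.1)%N]
    = (p^-1 oi, p^-1 oi1) |: [set q : 'I_n * 'I_n | (q.1 < q.2)%N && (p q.2 < p q.1)%N].
  apply/setP => -[a b]; rewrite !inE /= !permM tperm_adj_ltn xpair_eqE !p_eq_i !p_eq_i1.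
  case: (a =P p^-1 oi) => [->|_] /=.
    case: (b =P p^-1 oi1) => [->|_] /=; first by rewrite lt_p.
    by rewrite (inj_eq perm_inj) ord_i_neq.
  case: (a =P p^-1 oi1) => [->|_] //=.
  by case: (b =P p^-1 oi) => [->|_] //=; rewrite ltnNge (ltnW lt_p).
by rewrite cardsU1 inE /= !permKV (ltn_geF (leqnSn i.+1)) andbF.
Qed.

Lemma inversions_mul_tperm_gt (p : 'S_n) :
  p^-1 oi1 < p^-1 oi -> inversions p = (inversions (p * t)).+1.
Proof.
move=> gt_p; rewrite -inversions_mul_tperm -?mulgA ?tperm2 ?mulg1 //.
by rewrite invgM tpermV !permM tpermL tpermR.
Qed.

Lemma inversions_mul_tperm_le (p : 'S_n) : inversions (p * t) <= (inversions p).+1.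
Proof.
case: (ltngtP (p^-1 oi) (p^-1 oi1)) => [lt_p | gt_p | /val_inj/perm_inj].
- by rewrite inversions_mul_tperm.
- by rewrite (inversions_mul_tperm_gt gt_p) ltnW.
- by move/eqP; rewrite ord_i_neq.
Qed.

Lemma act_mon_mul_tperm (w : 'S_n) (d : mon n) :
  act_mon (w * t) d = swap_pair lt_i1n (act_mon w d).
Proof.
apply/ffunP => k; rewrite !ffunE invgM tpermV permM.
case: (k =P oi) => [->|/eqP ki]; first by rewrite tpermL.
case: (k =P oi1) => [->|/eqP ki1]; first by rewrite tpermR.
by rewrite tpermD // eq_sym.
Qed.

Lemma des_sub_mul_tperm (w : 'S_n) (d : mon n) :
  w^-1 oi < w^-1 oi1 -> des_sub (w * t) d -> des_sub w d.
Proof.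
move=> lt_w des j j' jj' w_desc; apply: (des _ _ jj'); rewrite !permM tperm_adj_ltn.
case: ifP => // _; case: ifP => // /andP[/eqP wj /eqP wj'].
by move: lt_w; rewrite -wj -wj' !permK jj' ltnNge leqnSn.
Qed.

Lemma act_mon_descent (w : 'S_n) (d : mon n) : weakly_decr d ->
  des_sub (w * t) d -> w^-1 oi < w^-1 oi1 -> act_mon w d oi1 < act_mon w d oi.
Proof.
move=> d_decr des lt_w; rewrite !ffunE; apply: (des_sub_weakly_decr d_decr des lt_w).
by rewrite !permM !permKV tpermL tpermR /=.
Qed.

Lemma mul_tperm_word s (w : 'S_n) :
  (forall k, w k = foldr (fun j y => sadj n j y) k (i :: s)) ->
  forall k, (w * t) k = foldr (fun j y => sadj n j y) k s.
Proof. by move=> w_word k; rewrite permM w_word /= sadj_tperm tpermK. Qed.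

End AdjacentTransposition.

Lemma act_mon1 n (d : mon n) : act_mon 1 d = d.
Proof. by apply/ffunP => k; rewrite ffunE invg1 perm1. Qed.

Lemma inversions1 n : inversions (1 : 'S_n) = 0.
Proof.
apply/eqP; rewrite cards_eq0; apply/eqP/setP => -[a b]; rewrite !inE !perm1 /=.
by apply/negbTE/negP => /andP[/ltn_trans/[apply]]; rewrite ltnn.
Qed.

Lemma inversions_le_size n (s : seq nat) (w : 'S_n) : all (fun i => i.+1 < n) s ->
  (forall k, w k = foldr (fun i y => sadj n i y) k s) -> inversions w <= size s.
Proof.
elim: s w => [|j s IH] w /=.
  move=> _ w1; have -> : w = 1%g by apply/permP=> k; rewrite w1 perm1.
  by rewrite inversions1.
case/andP=> lt_j1n all_s w_word.
have -> : w = (w * tperm (ord_i lt_j1n) (ord_i1 lt_j1n) * tperm (ord_i lt_j1n) (ord_i1 lt_j1n))%g.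
  by rewrite -mulgA tperm2 mulg1.
apply: leq_trans (inversions_mul_tperm_le _ _) _.
by rewrite ltnS; apply: IH => //; apply: mul_tperm_word.
Qed.

Lemma reduced_word_cons n j s (w : 'S_n) (lt_j1n : j.+1 < n) :
  reduced_word (w * tperm (ord_i lt_j1n) (ord_i1 lt_j1n))%g (j :: s) ->
  reduced_word w s /\ (w^-1)%g (ord_i lt_j1n) < (w^-1)%g (ord_i1 lt_j1n).
Proof.
case=> /andP[_ all_s] [w_word size_s].
have word_s := mul_tperm_word lt_j1n w_word; rewrite -mulgA tperm2 mulg1 in word_s.
have le_s := inversions_le_size all_s word_s.
case: (ltngtP ((w^-1)%g (ord_i lt_j1n)) ((w^-1)%g (ord_i1 lt_j1n)))
  => [lt_w | gt_w | /val_inj/perm_inj].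
- by move: size_s; rewrite inversions_mul_tperm //= => -[].
- by move: le_s; rewrite (inversions_mul_tperm_gt gt_w) -size_s ltnNge leqnSn.
- by move/eqP; rewrite ord_i_neq.
Qed.

Lemma dominant_term_pibar_word (F : fieldType) n (d : mon n) (s : seq nat) (w : 'S_n) :
  weakly_decr d -> des_sub w d -> reduced_word w s ->
  dominant_term (pibar_word s (monomial F d)) (act_mon w d).
Proof.
move=> d_decr; elim: s w => [|j s IH] w des red.
  have -> : w = 1%g by case: red => _ [w1 _]; apply/permP => k; rewrite w1 perm1.
  by rewrite act_mon1; apply: dominant_term_monomial.
have lt_j1n : j.+1 < n by case: red => /andP[].
have [w' Ew] : exists w', w = (w' * tperm (ord_i lt_j1n) (ord_i1 lt_j1n))%g.
  by exists (w * tperm (ord_i lt_j1n) (ord_i1 lt_j1n))%g; rewrite -mulgA tperm2 mulg1.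
subst w.
have [red' lt_w'] := reduced_word_cons red.
rewrite act_mon_mul_tperm /=; apply: dominant_term_pibar.
  exact: act_mon_descent d_decr des lt_w'.
exact: IH (des_sub_mul_tperm lt_w' des) red'.
Qed.

Unset Implicit Arguments.

Theorem mainTheorem12 (F : fieldType) (n : nat) (d : mon n) (w : 'S_n)
    (s : seq nat) :
  weakly_decr d -> des_sub w d -> reduced_word w s ->
  leading_term (pibar_word s (monomial F d)) (act_mon w d) 1%R.
Proof.
by move=> d_decr des red; apply/dominant_term_leading/dominant_term_pibar_word.
Qed.
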